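(* Let $n>0$ be a fixed integer. Then for any integer $b>0$ there exist infinitely many integers $a>0$ such that the lattice $\mathbb{L}_{ab}$ contains no nonzero isotropic vector and $\mu(\mathbb{L}_{ab})<-n$, i.e. $\mathbb{L}_{ab}$ does not represent any of $0,-1,-2,\dots,-n$ by a nonzero vector.
   Context: For an integer $c>0$, $\mathbb{L}_c$ denotes the lattice $\mathbb{Z}^2$ with quadratic form $q(x,y)=x^2-cy^2$. A lattice represents $n$ if some nonzero vector $v$ has $q(v)=n$. For a lattice $\mathbb{L}$, $\mu(\mathbb{L})$ is the largest negative integer of the form $q(v)$, $v\in\mathbb{L}$. *)

From Stdlib Require Import ZArith.
Open Scope Z_scope.

(* The lattice L_c = Z^2 with quadratic form q(x,y) = x^2 - c y^2. *)
Definition qL (c : Z) (v : Z * Z) : Z := (fst v)^2 - c * (snd v)^2.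

Definition represents (c m : Z) : Prop :=
  exists v : Z * Z, v <> (0, 0) /\ qL c v = m.

Definition has_isotropic (c : Z) : Prop := represents c 0.

(* mu(L_c) < -n, expressed as: L_c represents none of -1, ..., -n
   (mu is the largest negative value of q; mu < -n iff no value in [-n,-1]). *)
Definition mu_lt (c n : Z) : Prop :=
  forall k : Z, 1 <= k <= n -> ~ represents c (- k).

(* For c = m^2 - 1 the map (x, y) |-> (m x - c y, m y - x) preserves x^2 - c y^2.
   If x^2 - c y^2 = -k with 0 <= k < 2m - 2 and x, y > 0, then (m - 1) y < x < m y,
   so the image has second coordinate in [0, y): by descent y = 0, whence the
   lattice L_c represents neither 0 nor -1, ..., -n once 2m - 2 > n.  Every
   b > 0 divides such a c with arbitrarily large cofactor:
   t (b t + 2) * b = (b t + 1)^2 - 1. *)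
From Stdlib Require Import ZArith Lia.
Open Scope Z_scope.

Lemma qL_abs (c x y : Z) : qL c (Z.abs x, Z.abs y) = qL c (x, y).
Proof. unfold qL; cbn [fst snd]; rewrite !Z.pow_2_r, !Z.abs_square; reflexivity. Qed.

Lemma qL_sq_pred_invariant (m x y : Z) :
  qL (m^2 - 1) (m * x - (m^2 - 1) * y, m * y - x) = qL (m^2 - 1) (x, y).
Proof. unfold qL; cbn [fst snd]; ring. Qed.

Lemma qL_sq_pred_bounds (m k x y : Z) :
  2 <= m -> 0 <= k < 2 * m - 2 -> 0 <= x -> 0 < y ->
  qL (m^2 - 1) (x, y) = - k -> (m - 1) * y < x < m * y.
Proof.
  unfold qL; cbn [fst snd]; intros Hm Hk Hx Hy Hq.
  split; apply Z.square_lt_simpl_nonneg; nia.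
Qed.

Lemma qL_sq_pred_small_neg_axis (m k : Z) :
  2 <= m -> 0 <= k < 2 * m - 2 ->
  forall x y, qL (m^2 - 1) (x, y) = - k -> y = 0.
Proof.
  intros Hm Hk.
  enough (Hdesc : forall y, 0 <= y -> forall x, qL (m^2 - 1) (x, y) = - k -> y = 0).
  { intros x y Hq. rewrite <- qL_abs in Hq.
    apply Z.abs_0_iff, (Hdesc _ (Z.abs_nonneg y) _ Hq). }
  intros y0 Hy0.
  refine (Z_lt_induction
    (fun y => 0 <= y -> forall x, qL (m^2 - 1) (x, y) = - k -> y = 0) _ y0 Hy0 Hy0).
  intros y IH Hy x Hq.
  destruct (Z.eq_dec y 0) as [| Hy_ne]; [assumption | exfalso].
  rewrite <- (qL_abs _ x y), (Z.abs_eq y) in Hq by lia.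
  pose proof (qL_sq_pred_bounds m k (Z.abs x) y Hm Hk (Z.abs_nonneg x)
                ltac:(lia) Hq) as Hb.
  rewrite <- qL_sq_pred_invariant in Hq.
  specialize (IH (m * y - Z.abs x) ltac:(nia) ltac:(nia) _ Hq).
  lia.
Qed.

Lemma sq_pred_no_isotropic (m : Z) : 2 <= m -> ~ has_isotropic (m^2 - 1).
Proof.
  intros Hm [[x y] [Hne Hq]].
  assert (y = 0) by (apply (qL_sq_pred_small_neg_axis m 0 Hm ltac:(lia) x); lia).
  subst y; unfold qL in Hq; cbn [fst snd] in Hq.
  apply Hne; f_equal; nia.
Qed.

Lemma sq_pred_mu_lt (m n : Z) : 2 <= m -> n < 2 * m - 2 -> mu_lt (m^2 - 1) n.
Proof.
  intros Hm Hn k Hk [[x y] [_ Hq]].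
  assert (y = 0) by exact (qL_sq_pred_small_neg_axis m k Hm ltac:(lia) x y Hq).
  subst y; unfold qL in Hq; cbn [fst snd] in Hq; nia.
Qed.

Theorem proposition2p3 (n : Z) (hn : 0 < n) :
  forall b : Z, 0 < b ->
  forall N : Z, exists a : Z, N < a /\ 0 < a /\
    ~ has_isotropic (a * b) /\ mu_lt (a * b) n.
Proof.
  intros b Hb N.
  set (t := Z.abs N + n + 2).
  exists (t * (b * t + 2)).
  assert (Hab : t * (b * t + 2) * b = (b * t + 1)^2 - 1) by ring.
  assert (Hm : n + 3 <= b * t + 1) by (unfold t; nia).
  rewrite Hab.
  repeat split; try (unfold t; nia).
  - apply sq_pred_no_isotropic; lia.
  - apply sq_pred_mu_lt; lia.
Qed.
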